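(* Let $0<p<\infty$ and let $m,n\ge1$ be integers. Then there does not exist any continuous map $\tau:\mathbb{R}^m\to\mathbb{R}^n$ such that the composition operator $C_\tau f=f\circ\tau$ is bounded from $L^{p,\infty}(\mathbb{R}^n)$ to $L^\infty(\mathbb{R}^m)$.
   Context: $\mathbb{R}^n,\mathbb{R}^m$ carry Lebesgue measure $|\cdot|$. $L^{p,\infty}(\mathbb{R}^n)$ (weak $L^p$) consists of measurable $f$ with $\|f\|_{L^{p,\infty}}=\sup_{t>0}t\,|\{x:|f(x)|>t\}|^{1/p}<\infty$. Boundedness means $\|C_\tau f\|_{L^\infty(\mathbb{R}^m)}\le C\|f\|_{L^{p,\infty}(\mathbb{R}^n)}$ for some $C$ and all $f\in L^{p,\infty}(\mathbb{R}^n)$. *)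

(* R^n is modelled as 'rV[R]_n. *)
From HB Require Import structures.
From mathcomp Require Import all_boot all_order all_algebra.
From mathcomp Require Import all_classical all_reals all_analysis.
Set Implicit Arguments. Unset Strict Implicit. Unset Printing Implicit Defensive.
Import Order.TTheory GRing.Theory Num.Theory.
Import numFieldNormedType.Exports.
Local Open Scope classical_set_scope.
Local Open Scope ring_scope.

Section Defs.
Context {R : realType}.

Definition box n (a b : 'rV[R]_n) : set 'rV[R]_n :=
  [set x | forall i, a ord0 i <= x ord0 i <= b ord0 i].

Definition box_vol n (a b : 'rV[R]_n) : R := \prod_(i < n) (b ord0 i - a ord0 i).

Definition lebn n (A : set 'rV[R]_n) : \bar R :=
  ereal_inf [set (\sum_(0 <= k <oo) (box_vol (ab.1 k) (ab.2 k))%:E)%E |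
    ab in [set ab : (nat -> 'rV[R]_n) * (nat -> 'rV[R]_n) |
      (forall k i, ab.1 k ord0 i <= ab.2 k ord0 i) /\
      A `<=` \bigcup_k box (ab.1 k) (ab.2 k)]].

Definition leb_measurable n (A : set 'rV[R]_n) : Prop := (@lebn n).-caratheodory A.

Definition leb_measurable_fun n (f : 'rV[R]_n -> R) : Prop :=
  forall B : set R, measurable B -> leb_measurable (f @^-1` B).

Definition weakLp_norm n (p : R) (f : 'rV[R]_n -> R) : \bar R :=
  ereal_sup [set (t%:E * poweR (lebn [set x | (t < `|f x|)%R]) p^-1)%E | t in [set t : R | 0 < t]].

Definition weakLp n (p : R) (f : 'rV[R]_n -> R) : Prop :=
  leb_measurable_fun f /\ (weakLp_norm p f < +oo)%E.

Definition Linf_norm m (g : 'rV[R]_m -> R) : \bar R :=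
  ereal_inf [set M : \bar R | lebn [set x | M < (`|g x|)%:E]%E = 0%E].

Definition comp_bounded m n (p : R) (tau : 'rV[R]_m -> 'rV[R]_n) : Prop :=
  exists C : R, forall f : 'rV[R]_n -> R, weakLp p f ->
    (Linf_norm (f \o tau) <= C%:E * weakLp_norm p f)%E.
End Defs.

From HB Require Import structures.
From mathcomp Require Import all_boot all_order all_algebra.
From mathcomp Require Import all_classical all_reals all_analysis.
From mathcomp Require Import lra measurable_realfun.
Import Order.TTheory GRing.Theory Num.Theory.
Import numFieldNormedType.Exports.
Local Open Scope classical_set_scope.
Local Open Scope ring_scope.

(* Test a bounded C_tau, with constant C, on f = K 1_B, where K = |C| + 1 and B
   is a cube around tau 0 with |B| <= K^-p: the weak-L^p quasi-norm of f is at
   most K |B|^(1/p) <= 1, whereas by continuity f o tau = K on a cube around 0,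
   which has positive measure, so ||f o tau||_oo >= K > |C| >= C ||f||.
   For the covering outer measure lebn this needs two facts: boxes are
   Caratheodory measurable (split every covering box along a hyperplane), and a
   box has measure at least its volume (by induction on the dimension,
   integrating the covering inequality along the first coordinate). *)

Section lebn_outer.
Context {R : realType} {n : nat}.
Implicit Types (A B : set 'rV[R]_n) (a b : 'rV[R]_n).
Local Open Scope ereal_scope.

Lemma box_vol_ge0 a b : (forall i, a ord0 i <= b ord0 i)%R -> (0 <= box_vol a b)%R.
Proof. by move=> ab; apply: prodr_ge0 => i _; rewrite subr_ge0. Qed.

Lemma box_vol_flat a : (0 < n)%N -> box_vol a a = 0%R.
Proof. by move=> n0; rewrite /box_vol (bigD1 (Ordinal n0)) //= subrr mul0r. Qed.

Lemma lebn_ge0 A : 0 <= lebn A.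
Proof.
apply: le_ereal_inf_tmp => _ [ab [ab_le _] <-].
by apply: nneseries_ge0 => k _ _; rewrite lee_fin box_vol_ge0.
Qed.

Lemma le_lebn A B : A `<=` B -> lebn A <= lebn B.
Proof.
move=> AB; apply: ereal_inf_le_tmp => _ [ab [ab_le Bcov] <-].
by exists ab => //; split => //; apply: subset_trans Bcov.
Qed.

Lemma lebn_cover_le {A} {a b : nat -> 'rV[R]_n} :
  (forall k i, (a k ord0 i <= b k ord0 i)%R) ->
  A `<=` \bigcup_k box (a k) (b k) ->
  lebn A <= \sum_(0 <= k <oo) (box_vol (a k) (b k))%:E.
Proof. by move=> ab Acov; apply: ereal_inf_lbound; exists (a, b). Qed.

Lemma lebn_sub_box A a b : (0 < n)%N -> (forall i, (a ord0 i <= b ord0 i)%R) ->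
  A `<=` box a b -> lebn A <= (box_vol a b)%:E.
Proof.
move=> n0 ab Ab.
(* Pad the cover with flat boxes, of volume 0 because [0 < n]. *)
pose hi k := if k == 0%N then b else a.
have hi_ge k i : (a ord0 i <= hi k ord0 i)%R by rewrite /hi; case: ifP.
apply: le_trans (lebn_cover_le hi_ge _) _; first by move=> x /Ab; exists 0%N.
rewrite (nneseries_split 0 1) => [|k _]; last by rewrite lee_fin box_vol_ge0.
by rewrite big_nat1 eseries0 ?adde0// => -[|k]// _ _; rewrite box_vol_flat.
Qed.

Lemma lebn0 : (0 < n)%N -> lebn (@set0 'rV[R]_n) = 0.
Proof.
move=> n0; apply/le_anti; rewrite lebn_ge0 andbT.
by have := lebn_sub_box _ _ _ n0 (fun=> lexx _) (sub0set (box 0 0)); rewrite box_vol_flat.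
Qed.

End lebn_outer.

Definition interleave {T} (v w : nat -> T) k := if odd k then w k./2 else v k./2.

Lemma interleave_double {T} (v w : nat -> T) k : interleave v w k.*2 = v k.
Proof. by rewrite /interleave odd_double doubleK. Qed.

Lemma interleave_doubleS {T} (v w : nat -> T) k : interleave v w k.*2.+1 = w k.
Proof. by rewrite /interleave /= odd_double uphalf_double. Qed.

Section interleave_series.
Context {R : realType}.
Local Open Scope ereal_scope.
Implicit Types v w : nat -> \bar R.

Lemma sum_interleave v w N : \sum_(0 <= k < N.*2) interleave v w k =
  \sum_(0 <= k < N) v k + \sum_(0 <= k < N) w k.
Proof.
elim: N => [|N IH]; first by rewrite !big_geq// adde0.
rewrite doubleS !big_nat_recr//= IH interleave_double interleave_doubleS.
by rewrite -addeA addeACA addeA.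
Qed.

Lemma nneseries_interleave_le v w : (forall k, 0 <= v k) -> (forall k, 0 <= w k) ->
  \sum_(0 <= k <oo) interleave v w k <=
  \sum_(0 <= k <oo) v k + \sum_(0 <= k <oo) w k.
Proof.
move=> v0 w0; have vw0 k : 0 <= interleave v w k by rewrite /interleave; case: ifP.
apply: lime_le; first exact: is_cvg_nneseries.
apply: nearW => N; apply: le_trans (_ : _ <= \sum_(0 <= k < N.*2) interleave v w k) _.
  by apply: (ereal_nondecreasing_series (fun k _ _ => vw0 k)); rewrite -addnn leq_addr.
by rewrite sum_interleave; apply: leeD; exact: nneseries_lim_ge.
Qed.

End interleave_series.

Section lebn_measurable.
Context {R : realType} {n : nat}.
Implicit Types (A B X : set 'rV[R]_n).
Local Open Scope ereal_scope.

Lemma lebnU A B : lebn (A `|` B) <= lebn A + lebn B.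
Proof.
have lebn_neqNy X : lebn X != -oo by rewrite -ltNye (lt_le_trans ltNy0)// lebn_ge0.
have [->|Afin] := eqVneq (lebn A) +oo; first by rewrite addye ?leey.
have [->|Bfin] := eqVneq (lebn B) +oo; first by rewrite addey ?leey.
have fin_lebn X : lebn X != +oo -> lebn X \is a fin_num.
  by move=> Xfin; rewrite fin_numE Xfin lebn_neqNy.
apply/lee_addgt0Pr => e e0; have e20 : (0 < e / 2)%R by rewrite divr_gt0.
have [_ [[a1 b1] [ab1 cov1] <-] lt1] := lb_ereal_inf_adherent e20 (fin_lebn _ Afin).
have [_ [[a2 b2] [ab2 cov2] <-] lt2] := lb_ereal_inf_adherent e20 (fin_lebn _ Bfin).
rewrite /= in ab1 cov1 ab2 cov2 lt1 lt2.
pose vol (a b : nat -> 'rV[R]_n) k := (box_vol (a k) (b k))%:E.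
have vol_ge0 (a b : nat -> 'rV[R]_n) :
    (forall k i, (a k ord0 i <= b k ord0 i)%R) -> forall k, 0 <= vol a b k.
  by move=> ab k; rewrite lee_fin box_vol_ge0.
have ab k i : (interleave a1 a2 k ord0 i <= interleave b1 b2 k ord0 i)%R.
  by rewrite /interleave; case: ifP.
apply: le_trans (lebn_cover_le ab _) _.
  move=> x [/cov1 [k _ xk]|/cov2 [k _ xk]].
    by exists k.*2; rewrite // !interleave_double.
  by exists k.*2.+1; rewrite // !interleave_doubleS.
have -> : \sum_(0 <= k <oo) (box_vol (interleave a1 a2 k) (interleave b1 b2 k))%:E =
    \sum_(0 <= k <oo) interleave (vol a1 b1) (vol a2 b2) k.
  by apply: eq_eseriesr => k _; rewrite /interleave; case: ifP.
apply: le_trans (nneseries_interleave_le _ _ (vol_ge0 _ _ ab1) (vol_ge0 _ _ ab2)) _.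
by rewrite [e]splitr EFinD addeACA; apply: leeD; exact: ltW.
Qed.

End lebn_measurable.

Section set_coord.
Context {R : realType} {n : nat}.
Implicit Types (a b : 'rV[R]_n).

Definition set_coord a (i : 'I_n) (c : R) : 'rV[R]_n :=
  \row_j (if j == i then c else a ord0 j).

Lemma set_coord_eq a i c : set_coord a i c ord0 i = c.
Proof. by rewrite mxE eqxx. Qed.

Lemma set_coord_neq a i c j : j != i -> set_coord a i c ord0 j = a ord0 j.
Proof. by rewrite mxE => /negbTE ->. Qed.

Lemma box_vol_set_coord a b i c :
  box_vol a (set_coord b i c) + box_vol (set_coord a i c) b = box_vol a b.
Proof.
rewrite /box_vol (bigD1 i)//= [X in _ + X](bigD1 i)//= [RHS](bigD1 i)//=.
rewrite !set_coord_eq.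
under eq_bigr => j ji do rewrite set_coord_neq//.
under [X in _ + _ * X]eq_bigr => j ji do rewrite set_coord_neq//.
by rewrite -mulrDl addrC subrKA.
Qed.

End set_coord.

Section caratheodory.
Context {R : realType} {n : nat}.
Implicit Types (A B X : set 'rV[R]_n) (a b : 'rV[R]_n).
Local Open Scope ereal_scope.

Lemma le_leb_measurable A :
  (forall X, lebn (X `&` A) + lebn (X `&` ~` A) <= lebn X) -> leb_measurable A.
Proof.
move=> le_split X; apply/le_anti; rewrite le_split andbT.
apply: le_trans (lebnU _ _); apply: le_lebn => x Xx.
by have [Ax|nAx] := pselect (A x); [left|right].
Qed.

Lemma leb_measurableC A : leb_measurable A -> leb_measurable (~` A).
Proof. by move=> mA X; rewrite setCK addeC. Qed.

Lemma leb_measurableI A B : leb_measurable A -> leb_measurable B ->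
  leb_measurable (A `&` B).
Proof.
move=> mA mB X.
rewrite (mA X) (mB (X `&` A)) (mA (X `&` ~` (A `&` B))).
have -> : X `&` ~` (A `&` B) `&` A = X `&` A `&` ~` B.
  apply/seteqP; split => x /=.
  - by move=> [[Xx nAB] Ax]; split => // Bx; apply: nAB.
  - by move=> [[Xx Ax] nB]; split => //; split => // -[].
have -> : X `&` ~` (A `&` B) `&` ~` A = X `&` ~` A.
  apply/seteqP; split => x /=; first by move=> [[]].
  by move=> [Xx nA]; split => //; split => // -[].
by rewrite setIA addeA.
Qed.

Lemma leb_measurableT : (0 < n)%N -> leb_measurable [set: 'rV[R]_n].
Proof. by move=> n0 X; rewrite setIT setCT setI0 lebn0// adde0. Qed.

Lemma leb_measurable0 : (0 < n)%N -> leb_measurable (@set0 'rV[R]_n).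
Proof. by move=> n0; rewrite -setCT; apply/leb_measurableC/leb_measurableT. Qed.

Lemma lebn_split_coord_le X i c :
  lebn (X `&` [set x | x ord0 i <= c]%R) + lebn (X `&` [set x | c <= x ord0 i]%R)
    <= lebn X.
Proof.
apply: le_ereal_inf_tmp => _ [[a b] [ab Xcov] <-]; rewrite /= in ab Xcov *.
(* Clamping [c] into each [i]-th side keeps both halves of every box ordered. *)
pose c' k := Num.min (b k ord0 i) (Num.max (a k ord0 i) c).
have c'_in k : (a k ord0 i <= c' k <= b k ord0 i)%R.
  by rewrite /c' le_min ge_min le_max lexx ab /= lexx.
have lower_le k j : (a k ord0 j <= set_coord (b k) i (c' k) ord0 j)%R.
  by rewrite mxE; case: eqP => [->|_]; [case/andP: (c'_in k)|exact: ab].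
have upper_le k j : (set_coord (a k) i (c' k) ord0 j <= b k ord0 j)%R.
  by rewrite mxE; case: eqP => [->|_]; [case/andP: (c'_in k)|exact: ab].
apply: le_trans (leeD (lebn_cover_le lower_le _) (lebn_cover_le upper_le _)) _.
- move=> x [/Xcov [k _ xk] /= xc]; exists k => // j; rewrite mxE.
  case: eqP => [->|_]; last exact: xk.
  have /andP[-> xb] := xk i.
  by rewrite /c' le_min xb le_max xc orbT.
- move=> x [/Xcov [k _ xk] /= cx]; exists k => // j; rewrite mxE.
  case: eqP => [->|_]; last exact: xk.
  have /andP[ax ->] := xk i.
  by rewrite andbT /c' ge_min ge_max ax cx orbT.
rewrite -nneseriesD => [|k _ _|k _ _]; last 2 first.
- by rewrite lee_fin box_vol_ge0.
- by rewrite lee_fin box_vol_ge0.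
by under eq_eseriesr => k _ do rewrite -EFinD box_vol_set_coord.
Qed.

Lemma leb_measurable_halfspace (H : set 'rV[R]_n) (i : 'I_n) (c : R) :
  [set x : 'rV[R]_n | x ord0 i < c]%R `<=` H -> H `<=` [set x : 'rV[R]_n | x ord0 i <= c]%R ->
  leb_measurable H.
Proof.
move=> ltH Hle; apply: le_leb_measurable => X.
apply: le_trans (lebn_split_coord_le X i c); apply: leeD; apply: le_lebn.
  by move=> x [Xx /Hle]; split.
by move=> x [Xx nHx]; split => //=; rewrite leNgt; apply: contra_notN nHx => /ltH.
Qed.

Lemma leb_measurable_box a b : (0 < n)%N -> leb_measurable (box a b).
Proof.
move=> n0; pose slab i := [set x : 'rV[R]_n | a ord0 i <= x ord0 i <= b ord0 i]%R.
have -> : box a b = \bigcap_(i in [set` enum 'I_n]) slab i.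
  by apply/seteqP; split => [x xab i _|x xab i]; [exact: xab|apply: xab; rewrite /= mem_enum].
rewrite bigcap_seq; apply: big_ind; [exact: leb_measurableT|exact: leb_measurableI|].
move=> i _; have -> : slab i =
    ~` [set x | x ord0 i < a ord0 i]%R `&` [set x | x ord0 i <= b ord0 i]%R.
  apply/seteqP; split => x /=.
    by case/andP => ax xb; split => //; rewrite ltNge ax.
  by case=> /negP; rewrite -leNgt /slab /= => -> ->.
apply: leb_measurableI; first apply: leb_measurableC.
  by apply: (leb_measurable_halfspace _ i (a ord0 i)) => // x /ltW.
by apply: (leb_measurable_halfspace _ i (b ord0 i)) => // x /ltW.
Qed.

End caratheodory.

Section box_cover.
Context {R : realType}.
Local Open Scope ereal_scope.

Lemma lebesgue_measure_itvcc (a b : R) : (a <= b)%R ->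
  lebesgue_measure `[a, b] = (b - a)%:E.
Proof.
rewrite le_eqVlt => /predU1P[->|ab]; last by rewrite lebesgue_measure_itv /= lte_fin ab EFinB.
by rewrite set_itv1 lebesgue_measure_set1 subrr.
Qed.

Lemma nneseries_ge_term (u : nat -> \bar R) k : (forall i, 0 <= u i) ->
  u k <= \sum_(0 <= i <oo) u i.
Proof.
move=> u0; apply: le_trans (nneseries_lim_ge k.+1 (fun i _ _ => u0 i)).
by rewrite big_nat_recr//= leeDr// sume_ge0.
Qed.

Lemma itv_cover_integral_le (Q lo hi : R) (c a b : nat -> R) :
  (0 <= Q)%R -> (forall k, 0 <= c k)%R -> (forall k, a k <= b k)%R ->
  (forall t, (lo <= t <= hi)%R ->
    Q%:E <= \sum_(0 <= k <oo) (c k * \1_`[a k, b k] t)%:E) ->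
  (lo <= hi)%R -> (Q * (hi - lo))%:E <= \sum_(0 <= k <oo) (c k * (b k - a k))%:E.
Proof.
move=> Q0 c0 ab Qle lohi.
pose D := `[lo, hi]%classic : set R.
have mD : measurable D by exact: measurable_itv.
pose term k t := (c k * \1_`[a k, b k] t)%:E.
have mterm k : measurable_fun D (term k).
  by apply/measurable_EFinP/measurable_funM.
have term0 k t : 0 <= term k t by rewrite lee_fin mulr_ge0.
rewrite EFinM -(lebesgue_measure_itvcc _ _ lohi) -integral_cst//.
apply: le_trans (_ : _ <= \int[lebesgue_measure]_(t in D) \sum_(0 <= k <oo) term k t) _.
  apply: ge0_le_integral => //.
  exact: (ge0_emeasurable_sum (P := predT) (fun k t _ _ => term0 k t) (fun k _ => mterm k)).
rewrite integral_nneseries//; apply: lee_nneseries => [k _ _|k _].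
  by apply: integral_ge0 => t _.
have mI : measurable `[a k, b k]%classic by exact: measurable_itv.
under eq_integral do rewrite /term EFinM.
rewrite ge0_integralZl_EFin//; last by apply/measurable_EFinP; exact: measurable_indic.
rewrite integral_indic// EFinM lee_wpmul2l ?lee_fin// -lebesgue_measure_itvcc//.
exact: measureIl.
Qed.

Lemma box_cover_vol_le m (lo hi : 'I_m -> R) (a b : nat -> 'I_m -> R) (P : pred nat) :
  (forall i, lo i <= hi i)%R -> (forall k i, a k i <= b k i)%R ->
  (forall x, (forall i, lo i <= x i <= hi i)%R ->
     exists2 k, P k & forall i, (a k i <= x i <= b k i)%R) ->
  (\prod_i (hi i - lo i))%:E <=
    \sum_(0 <= k <oo) (if P k then \prod_i (b k i - a k i) else 0)%:E.
Proof.
have prod_ge0 m' (u v : 'I_m' -> R) : (forall i, u i <= v i)%R -> (0 <= \prod_i (v i - u i))%R.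
  by move=> uv; apply: prodr_ge0 => i _; rewrite subr_ge0.
have cover_term_ge0 m' (u v : nat -> 'I_m' -> R) (P' : pred nat) :
    (forall k i, u k i <= v k i)%R ->
    forall k, 0 <= (if P' k then \prod_i (v k i - u k i) else 0)%:E.
  by move=> uv k; case: ifP; rewrite lee_fin // => _; apply: prod_ge0.
elim: m lo hi a b P => [|m IH] lo hi a b P lohi ab cover.
  case: (cover lo) => [i|k Pk _]; first by rewrite lexx lohi.
  apply: le_trans (nneseries_ge_term _ k (cover_term_ge0 _ _ _ P ab)).
  by rewrite Pk !big_ord0.
pose tl (v : 'I_m.+1 -> R) (j : 'I_m) := v (lift ord0 j).
pose c k := (if P k then \prod_j (tl (b k) j - tl (a k) j) else 0)%R.
rewrite big_ord_recl mulrC.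
have -> : \sum_(0 <= k <oo) (if P k then \prod_i (b k i - a k i) else 0)%:E =
    \sum_(0 <= k <oo) (c k * (b k ord0 - a k ord0))%:E.
  by apply: eq_eseriesr => k _; rewrite /c big_ord_recl; case: (P k); rewrite ?mul0r // mulrC.
apply: itv_cover_integral_le; last exact: lohi.
- by apply: prod_ge0 => j; exact: lohi.
- by move=> k; rewrite /c; case: (P k) => //; apply: prod_ge0 => j; exact: ab.
- by move=> k; exact: ab.
(* Slicing at [t] keeps in play the boxes whose first side contains [t]. *)
move=> t tlh.
have -> : \sum_(0 <= k <oo) (c k * \1_`[a k ord0, b k ord0] t)%:E =
    \sum_(0 <= k <oo) (if P k && (a k ord0 <= t <= b k ord0)%R
                       then \prod_j (tl (b k) j - tl (a k) j) else 0)%:E.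
  apply: eq_eseriesr => k _; rewrite /c indicE mem_setE in_itv /=.
  by case: (P k); case: (_ && _); rewrite ?mulr1 ?mulr0.
apply: IH => [j|k j|y ylh]; [exact: lohi|exact: ab|].
pose x i := if unlift ord0 i is Some j then y j else t.
have [k Pk xk] : exists2 k, P k & forall i, (a k i <= x i <= b k i)%R.
  by apply: cover => i; rewrite /x; case: unliftP => [j ->|->].
exists k; last by move=> j; have := xk (lift ord0 j); rewrite /x liftK.
by have := xk ord0; rewrite /x unlift_none Pk.
Qed.

Lemma lebn_box_ge m (lo hi : 'rV[R]_m) : (forall i, lo ord0 i <= hi ord0 i)%R ->
  (box_vol lo hi)%:E <= lebn (box lo hi).
Proof.
move=> lohi; apply: le_ereal_inf_tmp => _ [[a b] [ab cov] <-]; rewrite /= in ab cov.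
apply: (box_cover_vol_le _ _ _ _ _ predT) => // x xlh.
have /cov[k _ xk] : box lo hi (\row_i x i) by move=> i; rewrite mxE.
by exists k => // i; have := xk i; rewrite mxE.
Qed.

End box_cover.

Section cube.
Context {R : realType} {n : nat}.
Implicit Types (x y : 'rV[R]_n) (r : R).

Definition cube y r := box (y - const_mx r) (y + const_mx r).

Lemma cube_bounds y r (r0 : 0 <= r) i :
  (y - const_mx r) ord0 i <= (y + const_mx r) ord0 i.
Proof. by rewrite !mxE lerD2l (le_trans _ r0) ?oppr_le0. Qed.

Lemma box_vol_cube y r : box_vol (y - const_mx r) (y + const_mx r) = (r *+ 2) ^+ n.
Proof.
by rewrite /box_vol (eq_bigr (fun=> r *+ 2)) ?prodr_const ?card_ord// => i _; rewrite !mxE; lra.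
Qed.

Lemma lebn_cube_gt0 y r : 0 < r -> (0 < lebn (cube y r))%E.
Proof.
move=> r0; apply: lt_le_trans _ (lebn_box_ge _ _ _ (cube_bounds y r (ltW r0))).
by rewrite box_vol_cube lte_fin exprn_gt0// mulrn_wgt0.
Qed.

Lemma lebn_cube_small y e : (0 < n)%N -> 0 < e ->
  exists2 r, 0 < r & (lebn (cube y r) <= e%:E)%E.
Proof.
move=> n0 e0; pose s := Num.min 1 e.
have s0 : 0 < s by rewrite lt_min ltr01 e0.
exists (s / 2); first by rewrite divr_gt0.
apply: le_trans (lebn_sub_box _ _ _ n0 (cube_bounds y _ _) (@subset_refl _ _)) _.
  by rewrite divr_ge0 ?ltW.
rewrite box_vol_cube lee_fin mulr2n -splitr.
have s1 : s <= 1 by rewrite ge_min lexx.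
by rewrite (le_trans (ler_iXnr n0 (ltW s0) s1))// ge_min lexx orbT.
Qed.

Lemma nbhs_cube y r : 0 < r -> nbhs y (cube y r).
Proof.
move=> r0; apply/nbhs_ballP; exists r => // z [_ yz] i; rewrite !mxE.
by have := yz ord0 i; rewrite /ball /= ltr_distlC => /andP[/ltW -> /ltW ->].
Qed.

Lemma nbhs_sub_cube x (U : set 'rV[R]_n) : nbhs x U -> exists2 r, 0 < r & cube x r `<=` U.
Proof.
move=> /nbhs_ballP[e /= e0 xU]; exists (e / 2); first by rewrite divr_gt0.
move=> z xz; apply: xU; split => // i j; rewrite ord1 /ball /= ltr_distlC.
by have := xz j; rewrite !mxE => /andP[h1 h2]; apply/andP; split; lra.
Qed.

End cube.

Section norms.
Context {R : realType} {n : nat}.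
Implicit Types (A B : set 'rV[R]_n) (f g : 'rV[R]_n -> R).
Local Open Scope ereal_scope.

Lemma Linf_norm_ge g A (c : R) : lebn A != 0 -> (forall x, A x -> c <= `|g x|)%R ->
  c%:E <= Linf_norm g.
Proof.
move=> A_neq0 cg; apply: le_ereal_inf_tmp => M /= gM; rewrite leNgt.
apply/negP => Mc; move/eqP: A_neq0; apply.
apply/le_anti; rewrite lebn_ge0 andbT -gM.
by apply: le_lebn => x /cg cgx /=; rewrite (lt_le_trans Mc)// lee_fin.
Qed.

Lemma weakLp_norm_ge0 (p : R) f : 0 <= weakLp_norm p f.
Proof.
apply: le_ereal_sup_tmp; exists (1%:E * lebn [set x | 1 < `|f x|]%R `^ p^-1).
  by exists 1%R; rewrite //= ltr01.
by rewrite mul1e poweR_ge0.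
Qed.

Lemma weakLp_norm_indic_le (p K : R) B : (0 < n)%N -> (0 < p)%R -> (0 <= K)%R ->
  weakLp_norm p (fun y => K * \1_B y)%R <= K%:E * lebn B `^ p^-1.
Proof.
move=> n0 p0 K0; apply: ge_ereal_sup => _ [t /= t0 <-].
have [tK|Kt] := ltP t K.
  have -> : [set x | t < `|K * \1_B x|]%R = B.
    apply/seteqP; split => x; rewrite /= indicE.
      by case: (boolP (x \in B)) => [/set_mem //|_]; rewrite mulr0 normr0 ltNge (ltW t0).
    by move=> /mem_set ->; rewrite mulr1 ger0_norm.
  by rewrite lee_wpmul2r ?poweR_ge0// lee_fin ltW.
have -> : [set x | t < `|K * \1_B x|]%R = set0.
  apply/seteqP; split => x //=; rewrite indicE ger0_norm ?mulr_ge0//.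
  by case: (_ \in _); rewrite ?mulr1 ?mulr0 ltNge ?Kt ?(ltW t0).
by rewrite lebn0// poweR0r ?invr_neq0 ?gt_eqF// mule0 mule_ge0 ?poweR_ge0.
Qed.

Lemma leb_measurable_fun_indic (K : R) B : (0 < n)%N -> leb_measurable B ->
  leb_measurable_fun (fun y => K * \1_B y)%R.
Proof.
move=> n0 mB S _.
have fE y : (K * \1_B y = if y \in B then K else 0)%R.
  by rewrite indicE; case: (_ \in _); rewrite ?mulr1 ?mulr0.
have [SK|nSK] := pselect (S K); have [S0|nS0] := pselect (S 0%R).
- suff -> : (fun y => K * \1_B y)%R @^-1` S = setT by exact: leb_measurableT.
  by apply/seteqP; split => y //= _; rewrite fE; case: ifP.
- suff -> : (fun y => K * \1_B y)%R @^-1` S = B by [].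
  apply/seteqP; split => y; rewrite /preimage /= fE.
    by case: ifPn => [/set_mem|_ /nS0].
  by move=> /mem_set ->.
- suff -> : (fun y => K * \1_B y)%R @^-1` S = ~` B by exact: leb_measurableC.
  apply/seteqP; split => y; rewrite /preimage /= fE.
    by case: ifPn => [_ /nSK|/negP yB _ /mem_set/yB].
  by move=> nBy; rewrite ifN //; apply/negP => /set_mem/nBy.
- suff -> : (fun y => K * \1_B y)%R @^-1` S = set0 by exact: leb_measurable0.
  by apply/seteqP; split => y //=; rewrite fE; case: ifP.
Qed.

Lemma weakLp_norm_indic_le1 (p K : R) B : (0 < n)%N -> (0 < p)%R -> (0 < K)%R ->
  lebn B <= (K^-1 `^ p)%:E -> weakLp_norm p (fun y => K * \1_B y)%R <= 1.
Proof.
move=> n0 p0 K0 B_small.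
apply: le_trans (weakLp_norm_indic_le _ _ B n0 p0 (ltW K0)) _.
rewrite -(mulfV (lt0r_neq0 K0)) EFinM; apply: lee_wpmul2l; first by rewrite lee_fin ltW.
apply: le_trans (gt0_ler_poweR _ _ _ B_small) _.
- by rewrite invr_ge0 ltW.
- by rewrite in_itv /= lebn_ge0 leey.
- by rewrite in_itv /= lee_fin powR_ge0 leey.
by rewrite poweR_EFin -powRrM divff ?gt_eqF// powRr1 // invr_ge0 ltW.
Qed.

End norms.

Lemma mule_le_norm {R : realType} (C : R) (w : \bar R) :
  (0 <= w)%E -> (w <= 1)%E -> (C%:E * w <= `|C|%:E)%E.
Proof.
move=> w0 w1; apply: le_trans (_ : _ <= `|C|%:E * w)%E _.
  by apply: lee_wpmul2r => //; rewrite lee_fin ler_norm.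
by rewrite -[leRHS]mule1 lee_wpmul2l.
Qed.

Theorem proposition5p5 (R : realType) (p : R) (m n : nat) :
  0 < p -> (1 <= m)%N -> (1 <= n)%N ->
  ~ (exists tau : 'rV[R]_m -> 'rV[R]_n,
       continuous tau /\ comp_bounded p tau).
Proof.
move=> p0 _ n1 [tau [tau_cont [C tauC]]].
pose K := `|C| + 1; have K0 : 0 < K by rewrite ltr_pwDr.
have Kp0 : 0 < K^-1 `^ p by rewrite powR_gt0// invr_gt0.
have [r r0 small] := lebn_cube_small (tau 0) _ n1 Kp0.
pose B := cube (tau 0) r; pose f y := K * \1_B y.
have f_norm : (weakLp_norm p f <= 1)%E := weakLp_norm_indic_le1 _ _ _ n1 p0 K0 small.
have f_Lp : weakLp p f.
  split; last exact: le_lt_trans f_norm (ltry _).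
  exact/leb_measurable_fun_indic/leb_measurable_box.
have [d d0 tauB] := nbhs_sub_cube _ _ (tau_cont 0 _ (nbhs_cube _ _ r0)).
have K_le : (K%:E <= Linf_norm (f \o tau))%E.
  apply: (Linf_norm_ge _ (cube 0 d)); first by rewrite gt_eqF// lebn_cube_gt0.
  by move=> x /tauB Bx; rewrite /f /= indicE mem_set// mulr1 ger0_norm// ltW.
have := mule_le_norm C _ (weakLp_norm_ge0 _ _) f_norm.
move=> /(le_trans (tauC f f_Lp))/(le_trans K_le).
by rewrite lee_fin /K; lra.
Qed.
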